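(* Let $F=\{\mathbb{R}^{n};f_{1},\dots,f_{m}\}$ be an IFS of contractive similitudes (at least two distinct maps) that obeys the open set condition, with contraction factors $\lambda_i=s^{a_i}$ where $s=\max_i\lambda_i$. Suppose $a_{i}\in\mathbb{N}$ and the costs are $c_{i}=a_{i}$ for all $i=1,\dots,m$. Then for every closed $T\subset\mathbb{R}^n$ and every $\mathbf{i}\in\Sigma^{\infty}$ the tiling $\Pi_{T}(\mathbf{i})$ is commensurate; in particular $\Pi(\mathbf{i})=\Pi_A(\mathbf{i})$ and $\Xi(\mathbf{i})=\Pi_{\overline{C}}(\mathbf{i})$ are commensurate.
   Context: An IFS $F$ consists of maps $f_{i}:\mathbb{R}^{n}\to\mathbb{R}^{n}$ with $|f_{i}(x)-f_{i}(y)|=\lambda_{i}|x-y|$, $\lambda_{i}\in(0,1)$; its attractor $A$ is the unique nonempty compact set with $A=\bigcup_i f_i(A)$. $F$ obeys the open set condition if there is a nonempty open $O$ with $f_i(O)\subset O$ for all $i$ and $f_{i}(O)\cap f_{j}(O)=\emptyset$ for $i\neq j$. Let $\Sigma=\{1,\dots,m\}$, $\Sigma^{*}$ the nonempty finite words, $\Sigma^{\infty}$ the infinite sequences; $f_{\mathbf{i}}=f_{i_{1}}\circ\cdots\circ f_{i_{k}}$ for a word. The central open set is $C=\{x:d(x,A)<d(x,H)\}$ where $H=\bigcup\{f_{\mathbf{i}}^{-1}f_{\mathbf{j}}(A):\mathbf{i},\mathbf{j}\in\Sigma^{*},i_1\neq j_1\}$ and $d(x,Y)=\inf_{y\in Y}|x-y|$.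 For $\mathbf{i}\in\Sigma^{\infty}$: $\mathbf{i}|k=i_{1}\dots i_{k}$, $\mathbf{i}|0=\emptyset$, $f_{(\mathbf{j}|l)}=f_{j_{1}}\circ\cdots\circ f_{j_{l}}$, $f_{-(\mathbf{i}|k)}=f_{i_{1}}^{-1}\circ\cdots\circ f_{i_{k}}^{-1}$, $c(\mathbf{i}|k)=c_{i_{1}}+\cdots+c_{i_{k}}$, $c(\emptyset)=0$; \[ \Pi_{T}(\mathbf{i}|k)=f_{-(\mathbf{i}|k)}\big(\{f_{(\mathbf{j}|l)}(T):\mathbf{j}\in\Sigma^{\infty},\ l\in\mathbb{N},\ c(\mathbf{j}|l-1)\leq c(\mathbf{i}|k)<c(\mathbf{j}|l)\}\big),\quad \Pi_{T}(\mathbf{i})=\bigcup_{k\geq1}\Pi_{T}(\mathbf{i}|k). \] Each tile of $\Pi_T(\mathbf{i})$ is an image of $T$ under a similitude; its size is measured relative to $T$ by the similarity ratio. A tiling is commensurate if the sizes of all its tiles belong to a geometric progression. *)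

From mathcomp Require Import all_boot all_order all_algebra.
From mathcomp Require Import reals.
Set Implicit Arguments. Unset Strict Implicit. Unset Printing Implicit Defensive.
Import Order.TTheory GRing.Theory Num.Theory.
Local Open Scope ring_scope.

Section Defs.
Variables (R : realType) (n : nat).

Notation V := 'rV[R]_n.

Definition enorm (x : V) : R := Num.sqrt (\sum_(t < n) (x 0 t) ^+ 2).
Definition edist (x y : V) : R := enorm (x - y).

Definition similitude_ratio (g : V -> V) (r : R) : Prop :=
  forall x y, edist (g x) (g y) = r * edist x y.

Definition is_open (O : V -> Prop) : Prop :=
  forall x, O x -> exists2 e : R, 0 < e & forall y, edist x y < e -> O y.
Definition is_closed (T : V -> Prop) : Prop := is_open (fun x => ~ T x).

Definition img (g : V -> V) (X : V -> Prop) : V -> Prop :=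
  fun y => exists2 x, X x & y = g x.

Definition OSC (m : nat) (f : 'I_m -> V -> V) : Prop :=
  exists O : V -> Prop, is_open O /\ (exists x, O x) /\
    (forall i y, img (f i) O y -> O y) /\
    (forall i j, i != j -> forall y, img (f i) O y -> img (f j) O y -> False).

(* f_{j|l} = f_{j_1} o ... o f_{j_l}  (sequences are 0-indexed: j 0 = j_1) *)
Definition compw (m : nat) (f : 'I_m -> V -> V) (j : nat -> 'I_m) (l : nat)
  (x : V) : V := foldr (fun t acc => f (j t) acc) x (iota 0 l).

Definition costw (m : nat) (c : 'I_m -> R) (j : nat -> 'I_m) (l : nat) : R :=
  \sum_(t < l) c (j t).

(* The tiles of Pi_T(i), each given with its similitude g, the tile being g(T):
   g = f_{-(i|k)} o f_{(j|l)} with k >= 1 and c(j|l-1) <= c(i|k) < c(j|l).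
   Since f_{i|k} is injective, g = f_{-(i|k)} o f_{(j|l)} is characterized by
   f_{i|k} o g = f_{j|l}. *)
Definition tile_maps (m : nat) (f : 'I_m -> V -> V) (c : 'I_m -> R)
  (i : nat -> 'I_m) : (V -> V) -> Prop :=
  fun g => exists (k l : nat) (j : nat -> 'I_m),
    [/\ (1 <= k)%N,
        costw c j l.-1 <= costw c i k,
        costw c i k < costw c j l &
        forall x, compw f i k (g x) = compw f j l x].

Definition tiling (m : nat) (f : 'I_m -> V -> V) (c : 'I_m -> R)
  (T : V -> Prop) (i : nat -> 'I_m) : (V -> Prop) -> Prop :=
  fun t => exists2 g, tile_maps f c i g & t = img g T.

(* Pi_T(i) is commensurate: the sizes (similarity ratios relative to T) of all
   its tiles belong to a geometric progression b * theta^e, e in nat,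
   with 0 < theta < 1 and b > 0. *)
Definition commensurate (m : nat) (f : 'I_m -> V -> V) (c : 'I_m -> R)
  (T : V -> Prop) (i : nat -> 'I_m) : Prop :=
  exists (b theta : R), [/\ 0 < b, 0 < theta, theta < 1 &
    forall g, tile_maps f c i g ->
      exists e : nat, similitude_ratio g (b * theta ^+ e)].

End Defs.

From mathcomp Require Import all_boot all_order all_algebra.
From mathcomp Require Import reals.
Set Implicit Arguments. Unset Strict Implicit. Unset Printing Implicit Defensive.
Import Order.TTheory GRing.Theory Num.Theory.
Local Open Scope ring_scope.

(* With lambda_i = s^(a_i) and c_i = a_i, the map f_(j|l) is a similitude of
   ratio s^(c(j|l)).  A tile map g satisfies f_(i|k) o g = f_(j|l) with
   c(i|k) < c(j|l), so g has ratio s^(c(j|l) - c(i|k)), a power of s with a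
   natural exponent: every tile size lies in the progression (s^e). *)

Section Similitudes.
Variables (R : realType) (n : nat).
Notation V := 'rV[R]_n.

Lemma similitude_ratio_comp (g h : V -> V) (r q : R) :
  similitude_ratio g r -> similitude_ratio h q ->
  similitude_ratio (g \o h) (r * q).
Proof. by move=> hg hh x y; rewrite /= hg hh mulrA. Qed.

Lemma similitude_ratio_compKl (h g : V -> V) (r q : R) : r != 0 ->
  similitude_ratio h r -> similitude_ratio (h \o g) (r * q) ->
  similitude_ratio g q.
Proof. by move=> r_neq0 hh hhg x y; apply: (mulfI r_neq0); rewrite -hh hhg mulrA. Qed.

Lemma compw_recr (m : nat) (f : 'I_m -> V -> V) (j : nat -> 'I_m) (l : nat) x :
  compw f j l.+1 x = compw f j l (f (j l) x).
Proof. by rewrite /compw -[l.+1]addn1 iotaD foldr_cat. Qed.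

Lemma similitude_ratio_compw (m : nat) (f : 'I_m -> V -> V) (lambda : 'I_m -> R) :
  (forall i, similitude_ratio (f i) (lambda i)) ->
  forall j l, similitude_ratio (compw f j l) (\prod_(t < l) lambda (j t)).
Proof.
move=> hf j; elim=> [|l IH] x y; first by rewrite big_ord0 mul1r.
by rewrite big_ord_recr !compw_recr; exact: (similitude_ratio_comp IH (hf (j l)) x y).
Qed.

End Similitudes.

Section IntegralCosts.
Variables (R : realType) (n m : nat) (f : 'I_m -> 'rV[R]_n -> 'rV[R]_n).
Variables (s : R) (a : 'I_m -> nat) (c : 'I_m -> R).
Hypothesis s_neq0 : s != 0.
Hypothesis f_ratio : forall i, similitude_ratio (f i) (s ^+ a i).
Hypothesis c_nat : forall i, c i = (a i)%:R.

Lemma costw_nat j l : costw c j l = (\sum_(t < l) a (j t))%N%:R.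
Proof. by rewrite /costw natr_sum; apply: eq_bigr => t _; rewrite c_nat. Qed.

Lemma similitude_ratio_compw_expr j l :
  similitude_ratio (compw f j l) (s ^+ (\sum_(t < l) a (j t))).
Proof. by rewrite -prodrXr; exact: (similitude_ratio_compw f_ratio). Qed.

Lemma tile_maps_ratio_expr i g :
  tile_maps f c i g -> exists e : nat, similitude_ratio g (s ^+ e).
Proof.
case=> k [l [j [_ _ cost_lt f_ig]]].
rewrite !costw_nat ltr_nat in cost_lt.
set A := (\sum_(t < k) a (i t))%N in cost_lt.
set B := (\sum_(t < l) a (j t))%N in cost_lt.
exists (B - A)%N.
apply: (similitude_ratio_compKl (h := compw f i k) (r := s ^+ A)).
- by rewrite expf_neq0.
- exact: similitude_ratio_compw_expr.
- move=> x y; rewrite /= !f_ig -exprD subnKC ?(ltnW cost_lt) //.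
  exact: similitude_ratio_compw_expr.
Qed.

End IntegralCosts.

Theorem theorem2 (R : realType) (n m : nat)
  (f : 'I_m -> 'rV[R]_n -> 'rV[R]_n) (lambda : 'I_m -> R) (s : R)
  (a : 'I_m -> nat) (c : 'I_m -> R) :
  (forall i, 0 < lambda i /\ lambda i < 1) ->
  (forall i, similitude_ratio (f i) (lambda i)) ->
  (exists i j, f i <> f j) ->
  OSC f ->
  (forall i, lambda i <= s) -> (exists i, lambda i = s) ->
  (forall i, lambda i = s ^+ a i) ->
  (forall i, c i = (a i)%:R) ->
  forall (T : 'rV[R]_n -> Prop) (i : nat -> 'I_m),
    is_closed T -> commensurate f c T i.
Proof.
move=> lambda_01 f_ratio _ _ _ [i0 lambda_i0] lambda_expr c_nat T i _.
have [s_gt0 s_lt1] : 0 < s /\ s < 1 by rewrite -lambda_i0.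
have f_ratio_expr t : similitude_ratio (f t) (s ^+ a t) by rewrite -lambda_expr.
exists 1, s; split=> // g /(tile_maps_ratio_expr (lt0r_neq0 s_gt0) f_ratio_expr c_nat).
by case=> e g_ratio; exists e; rewrite mul1r.
Qed.
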